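(* Let $L=\langle S,A,\to\rangle$ be a labelled transition system. For all $x,y\in\{o,b\}$, the relation $\equiv_{E(x,y)}$ is an $(x,y)$-generic bisimulation.
   Context: An LTS is $\langle S,A,\to\rangle$ with states $S$, actions $A$ containing the internal action $\tau$, and $\to\subseteq S\times A\times S$; write $s\xrightarrow{a}t$, and $\twoheadrightarrow$ for the reflexive-transitive closure of $\xrightarrow{\tau}$. For $R\subseteq S\times S$ and $s,s',t$: $s\twoheadrightarrow_{o,R,t}s'$ iff $s\twoheadrightarrow s'$; $s\twoheadrightarrow_{b,R,t}s'$ iff $s\twoheadrightarrow s'$, $t\,R\,s$ and $t\,R\,s'$. For $x,y\in\{o,b\}$, a symmetric $R$ is an $(x,y)$-generic bisimulation if whenever $s\,R\,t$ and $s\xrightarrow{a}s'$, either $a=\tau$ and $s'\,R\,t$, or there exist $t',t_1,t_2$ with $t\twoheadrightarrow_{x,R,s}t_1\xrightarrow{a}t_2\twoheadrightarrow_{y,R,s'}t'$ and $s'\,R\,t'$. Generic bisimulation game. Let $\frown,\smile$ be formal tags and $E\subseteq\{\frown,\smile\}$. Spoiler-owned configurations $\langle (s,t),c,m,r\rangle_S$ and Duplicator-owned $\langle (s,t),c,m,r\rangle_D$ have $(s,t)\in S\times S$, $c\in (A\times S)\cup\{\dagger\}$, $m\in (S\times\{\frown,\smile\})\cup\{\dagger\}$, $r\in\{*,\checkmark\}$. From $\langle (s,t),c,m,r\rangle_S$ Spoiler may: (S1) move to $\langle (s,t),c,m,*\rangle_D$ if $c\neq\dagger$; (S2a) for some $s\xrightarrow{a}s'$,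 move to $\langle (s,t),(a,s'),(t,\frown),*\rangle_D$ if $c=\dagger$; (S2b) for some $s\xrightarrow{a}s'$, move to $\langle (s,t),(a,s'),(t,\frown),\checkmark\rangle_D$ if $c\neq (a,s')$; (S3) for some $t\xrightarrow{a}t'$, move to $\langle (t,s),(a,t'),(s,\frown),\checkmark\rangle_D$. From $\langle (u,v),(a,u'),(\bar v,f),r\rangle_D$ Duplicator may: (D1) move to $\langle (u',\bar v),\dagger,\dagger,\checkmark\rangle_S$ if $a=\tau$; (D2) if $f=\frown$ and $\bar v\xrightarrow{a}v'$: (a) move to $\langle (u',v'),(a,u'),(v',\smile),*\rangle_S$, or (b) move to $\langle (u',v'),\dagger,\dagger,\checkmark\rangle_S$, or (c) only if $\smile\in E$, move to $\langle (u,v),(a,u'),(v',\smile),*\rangle_S$; (D3) for some $\bar v\xrightarrow{\tau}v'$: (a) move to $\langle (u,v'),(a,u'),(v',f),*\rangle_S$, or (b) only if $f=\smile$, move to $\langle (u',v'),\dagger,\dagger,\checkmark\rangle_S$, or (c) only if $f\in E$, move to $\langle (u,v),(a,u'),(v',f),*\rangle_S$. Duplicator wins a finite play if Spoiler gets stuck, and an infinite play if it has infinitely many $\checkmark$ rewards; other plays are won by Spoiler. $s\equiv_E t$ iff Duplicator has a strategy winning all plays from $\langle (s,t),\dagger,\dagger,*\rangle_S$. $E(x,y)$ is the smallest set with $\frown\in E(o,y)$ and $\smile\in E(x,o)$ for all $x,y\in\{o,b\}$. *)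

From Stdlib Require Import List Relations.

Record LTS := {
  St : Type;
  Act : Type;
  tau : Act;
  step : St -> Act -> St -> Prop
}.

Arguments tau {_}.
Arguments step {_}.

Definition taustar (L : LTS) : relation (St L) :=
  clos_refl_trans (St L) (fun s t => step s tau t).

Inductive ob := o | b.

Definition tstep (L : LTS) (x : ob) (R : St L -> St L -> Prop)
  (t s s' : St L) : Prop :=
  match x with
  | o => taustar L s s'
  | b => taustar L s s' /\ R t s /\ R t s'
  end.

Definition generic_bisim (L : LTS) (x y : ob) (R : St L -> St L -> Prop) : Prop :=
  (forall s t, R s t -> R t s) /\
  (forall s t s' a, R s t -> step s a s' ->
     (a = tau /\ R s' t) \/
     (exists t' t1 t2, tstep L x R s t t1 /\ step t1 a t2 /\
                       tstep L y R s' t2 t' /\ R s' t')).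

Inductive tag := Frown | Smile.
Inductive player := Spoiler | Duplicator.

Record conf (L : LTS) := Conf {
  owner : player;
  pos : St L * St L;
  chal : option (Act L * St L);   (* c ; None = dagger *)
  mem : option (St L * tag);      (* m ; None = dagger *)
  rew : bool                      (* r ; true = checkmark, false = * *)
}.
Arguments Conf {_}.
Arguments owner {_}.
Arguments pos {_}.
Arguments chal {_}.
Arguments mem {_}.
Arguments rew {_}.

Inductive move (L : LTS) (E : tag -> Prop) : conf L -> conf L -> Prop :=
| S1 s t c m r : c <> None ->
    move L E (Conf Spoiler (s,t) c m r) (Conf Duplicator (s,t) c m false)
| S2a s t m r a s' : step s a s' ->
    move L E (Conf Spoiler (s,t) None m r)
             (Conf Duplicator (s,t) (Some (a,s')) (Some (t,Frown)) false)
| S2b s t c m r a s' : step s a s' -> c <> Some (a,s') ->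
    move L E (Conf Spoiler (s,t) c m r)
             (Conf Duplicator (s,t) (Some (a,s')) (Some (t,Frown)) true)
| S3 s t c m r a t' : step t a t' ->
    move L E (Conf Spoiler (s,t) c m r)
             (Conf Duplicator (t,s) (Some (a,t')) (Some (s,Frown)) true)
| D1 u v a u' vb f r : a = tau ->
    move L E (Conf Duplicator (u,v) (Some (a,u')) (Some (vb,f)) r)
             (Conf Spoiler (u',vb) None None true)
| D2a u v a u' vb r v' : step vb a v' ->
    move L E (Conf Duplicator (u,v) (Some (a,u')) (Some (vb,Frown)) r)
             (Conf Spoiler (u',v') (Some (a,u')) (Some (v',Smile)) false)
| D2b u v a u' vb r v' : step vb a v' ->
    move L E (Conf Duplicator (u,v) (Some (a,u')) (Some (vb,Frown)) r)
             (Conf Spoiler (u',v') None None true)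
| D2c u v a u' vb r v' : step vb a v' -> E Smile ->
    move L E (Conf Duplicator (u,v) (Some (a,u')) (Some (vb,Frown)) r)
             (Conf Spoiler (u,v) (Some (a,u')) (Some (v',Smile)) false)
| D3a u v a u' vb f r v' : step vb tau v' ->
    move L E (Conf Duplicator (u,v) (Some (a,u')) (Some (vb,f)) r)
             (Conf Spoiler (u,v') (Some (a,u')) (Some (v',f)) false)
| D3b u v a u' vb r v' : step vb tau v' ->
    move L E (Conf Duplicator (u,v) (Some (a,u')) (Some (vb,Smile)) r)
             (Conf Spoiler (u',v') None None true)
| D3c u v a u' vb f r v' : step vb tau v' -> E f ->
    move L E (Conf Duplicator (u,v) (Some (a,u')) (Some (vb,f)) r)
             (Conf Spoiler (u,v) (Some (a,u')) (Some (v',f)) false).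

(* A (history-dependent) Duplicator strategy maps the history
   [p_0; ...; p_i] (current position last) to the chosen next position. *)
Definition strategy (L : LTS) := list (conf L) -> conf L.

Definition hist {L : LTS} (p : nat -> conf L) (i : nat) : list (conf L) :=
  map p (seq 0 (S i)).

Definition consistent_prefix (L : LTS) (E : tag -> Prop) (sigma : strategy L)
  (c0 : conf L) (p : nat -> conf L) (n : nat) : Prop :=
  p 0 = c0 /\
  forall i, i < n ->
    move L E (p i) (p (S i)) /\
    (owner (p i) = Duplicator -> p (S i) = sigma (hist p i)).

(* sigma wins every play from c0: it always prescribes a legal move in
   Duplicator positions (so every finite maximal play ends with Spoiler
   stuck), and every infinite play has infinitely many checkmarks. *)
Definition dup_wins (L : LTS) (E : tag -> Prop) (sigma : strategy L)
  (c0 : conf L) : Prop :=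
  (forall p n, consistent_prefix L E sigma c0 p n ->
     owner (p n) = Duplicator -> move L E (p n) (sigma (hist p n))) /\
  (forall p, (forall n, consistent_prefix L E sigma c0 p n) ->
     forall N, exists i, N <= i /\ rew (p i) = true).

Definition game_equiv (L : LTS) (E : tag -> Prop) (s t : St L) : Prop :=
  exists sigma : strategy L,
    dup_wins L E sigma (Conf Spoiler (s,t) None None false).

Definition Exy (x y : ob) (f : tag) : Prop :=
  (f = Frown /\ x = o) \/ (f = Smile /\ y = o).

From Stdlib Require Import List Relations Arith Lia Classical ClassicalEpsilon.
Import ListNotations.

(* Both properties follow from Duplicator winning strategies being transferable along a
   ranked simulation between game positions: if each move of one game can be matched in the
   other so that a bounded rank never decreases, and checkmarks are matched while it stays
   constant, then ranks stabilise on every play and the Buchi condition carries over.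
   Swapping the two states, and forgetting a pending challenge, are such simulations; this
   gives symmetry of the game equivalence and lets us read it off intermediate positions.
   For the transfer property, after Spoiler's challenge s --a--> s' Duplicator must reach a
   position without pending challenge in finitely many steps (otherwise Spoiler repeats the
   challenge forever and no checkmark is earned). Along that run Duplicator's tau-moves build
   t ->> t1, its a-move gives t1 --a--> t2, and its further tau-moves build t2 ->> t'. When the
   current tag is not in E(x,y) Duplicator may not stay put, so the intermediate positions are
   related to s, resp. s', exactly as the b-variant of ->> demands. *)

Section Unroll.
Context {X : Type} (x0 : X) (g : list X -> nat -> X).

Fixpoint unroll (n : nat) : list X :=
  match n with O => [x0] | S m => unroll m ++ [g (unroll m) m] end.

Lemma last_unroll_S m : last (unroll (S m)) x0 = g (unroll m) m.
Proof. apply last_last. Qed.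

Lemma unroll_eq_map n : unroll n = map (fun i => last (unroll i) x0) (seq 0 (S n)).
Proof.
  induction n as [|n IHn]; [reflexivity|].
  rewrite seq_S, map_app, <- IHn; cbn [map plus].
  now rewrite last_unroll_S.
Qed.

End Unroll.

Lemma unroll_ext {X : Type} (x0 : X) g1 g2 n :
  (forall l m, m < n -> g1 l m = g2 l m) -> unroll x0 g1 n = unroll x0 g2 n.
Proof.
  induction n as [|n IHn]; intros H; [reflexivity|].
  cbn. rewrite IHn by (intros; apply H; lia). now rewrite H by lia.
Qed.

Lemma hist_unroll {L : LTS} (c0 : conf L) g n :
  hist (fun i => last (unroll c0 g i) c0) n = unroll c0 g n.
Proof. symmetry; apply unroll_eq_map. Qed.

Lemma nth_hist {L : LTS} (p : nat -> conf L) i j d : j <= i -> nth j (hist p i) d = p j.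
Proof.
  intros Hj. unfold hist.
  rewrite nth_indep with (d' := p 0) by (rewrite length_map, length_seq; lia).
  rewrite map_nth, seq_nth by lia. reflexivity.
Qed.

Lemma length_hist {L : LTS} (p : nat -> conf L) i : length (hist p i) = S i.
Proof. unfold hist. now rewrite length_map, length_seq. Qed.

Lemma hist_ext {L : LTS} (p q : nat -> conf L) i :
  (forall j, j <= i -> p j = q j) -> hist p i = hist q i.
Proof. intros H. apply map_ext_in. intros j Hj%in_seq. apply H. lia. Qed.

Lemma hist_S {L : LTS} (p : nat -> conf L) i : hist p (S i) = hist p i ++ [p (S i)].
Proof. unfold hist. now rewrite seq_S, map_app. Qed.

Lemma nondecreasing_bounded_stable (f : nat -> nat) (B : nat) :
  (forall i, f i <= f (S i)) -> (forall i, f i <= B) ->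
  exists M, forall i, M <= i -> f i = f M.
Proof.
  intros Hmono Hbound.
  assert (Hle : forall i j, i <= j -> f i <= f j).
  { induction 1 as [|j _ IH]; [lia|]. specialize (Hmono j). lia. }
  apply NNPP; intros Hnot.
  assert (Hgrow : forall k, exists i, k <= f i).
  { induction k as [|k [i Hi]]; [exists 0; lia|].
    assert (Hmoves : ~ forall j, i <= j -> f j = f i) by (intros H; apply Hnot; eauto).
    apply not_all_ex_not in Hmoves as [j Hj]. apply imply_to_and in Hj as [Hij Hne].
    exists j. specialize (Hle i j Hij). lia. }
  destruct (Hgrow (S B)) as [i Hi]. specialize (Hbound i). lia.
Qed.

Section Game.
Context (L : LTS) (E : tag -> Prop).

Definition winning (c : conf L) : Prop := exists sigma, dup_wins L E sigma c.

Lemma consistent_prefix_0 sigma c0 p : p 0 = c0 -> consistent_prefix L E sigma c0 p 0.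
Proof. intros H0. split; [exact H0|lia]. Qed.

Lemma consistent_prefix_S sigma c0 p n :
  consistent_prefix L E sigma c0 p n -> move L E (p n) (p (S n)) ->
  (owner (p n) = Duplicator -> p (S n) = sigma (hist p n)) ->
  consistent_prefix L E sigma c0 p (S n).
Proof.
  intros [H0 Hp] Hmv Hfollow. split; [exact H0|].
  intros j Hj. destruct (Nat.eq_dec j n) as [->|]; [now split|apply Hp; lia].
Qed.

Definition splice (p p' : nat -> conf L) (n j : nat) : conf L :=
  if j <? n then p j else p' (j - n).

Lemma splice_left p p' n j : p' 0 = p n -> j <= n -> splice p p' n j = p j.
Proof.
  intros H0 Hj. unfold splice.
  destruct (Nat.ltb_spec j n); [reflexivity|].
  replace j with n by lia. now rewrite Nat.sub_diag.
Qed.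

Lemma splice_right p p' n i : splice p p' n (n + i) = p' i.
Proof.
  unfold splice. destruct (Nat.ltb_spec (n + i) n); [lia|].
  f_equal. lia.
Qed.

Lemma hist_splice p p' n i : p' 0 = p n ->
  hist (splice p p' n) (n + i) = map p (seq 0 n) ++ hist p' i.
Proof.
  intros H0. induction i as [|i IHi].
  - unfold hist. rewrite Nat.add_0_r, seq_S, map_app. cbn.
    rewrite splice_left, H0 by auto. f_equal.
    apply map_ext_in. intros j Hj%in_seq. apply splice_left; auto; lia.
  - rewrite Nat.add_succ_r, !hist_S, IHi, app_assoc.
    now rewrite <- Nat.add_succ_r, splice_right.
Qed.

Lemma consistent_splice sigma c0 p p' n m :
  consistent_prefix L E sigma c0 p n ->
  consistent_prefix L E (fun h => sigma (map p (seq 0 n) ++ h)) (p n) p' m ->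
  consistent_prefix L E sigma c0 (splice p p' n) (n + m).
Proof.
  intros [Hp0 Hp] [Hp'0 Hp']. split.
  - now rewrite splice_left by (auto; lia).
  - intros j Hj. destruct (Nat.lt_ge_cases j n) as [Hjn|Hnj].
    + assert (Hh : hist (splice p p' n) j = hist p j)
        by (apply hist_ext; intros; apply splice_left; auto; lia).
      rewrite Hh, !splice_left by (auto; lia). now apply Hp.
    + replace j with (n + (j - n)) by lia.
      rewrite hist_splice, <- Nat.add_succ_r, !splice_right by auto.
      apply Hp'. lia.
Qed.

Lemma winning_after_prefix sigma c0 p n :
  dup_wins L E sigma c0 -> consistent_prefix L E sigma c0 p n -> winning (p n).
Proof.
  intros [Hlegal Hbuchi] Hp.
  exists (fun h => sigma (map p (seq 0 n) ++ h)). split.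
  - intros p' m Hp' Hown.
    pose proof (proj1 Hp') as Hp'0.
    rewrite <- hist_splice, <- (splice_right p p' n m) by auto.
    apply Hlegal; [now apply consistent_splice|now rewrite splice_right].
  - intros p' Hp' N.
    assert (Hall : forall k, consistent_prefix L E sigma c0 (splice p p' n) k).
    { intros k. destruct (consistent_splice _ _ _ _ _ k Hp (Hp' k)) as [H0 Hk].
      split; [exact H0|]. intros i Hi. apply Hk. lia. }
    destruct (Hbuchi _ Hall (n + N)) as [i [Hi Hr]].
    exists (i - n). split; [lia|].
    replace i with (n + (i - n)) in Hr by lia. now rewrite splice_right in Hr.
Qed.

Lemma winning_after_spoiler_move c d :
  winning c -> owner c = Spoiler -> move L E c d -> winning d.
Proof.
  intros [sigma Hwin] Hown Hmv.
  apply (winning_after_prefix sigma c (fun i => match i with 0 => c | _ => d end) 1 Hwin).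
  apply consistent_prefix_S; [now apply consistent_prefix_0|exact Hmv|congruence].
Qed.

Definition progress (k k' : nat) (d d' : conf L) : Prop :=
  k <= k' /\ (k' = k -> rew d = true -> rew d' = true).

(* [Q k c' c]: position c' of the simulating play is matched by c, at rank k. *)
Section RankedSimulation.
Variable Q : nat -> conf L -> conf L -> Prop.
Variable B : nat.
Hypothesis Q_bounded : forall k c' c, Q k c' c -> k <= B.
Hypothesis Q_owner : forall k c' c, Q k c' c -> owner c' = owner c.
Hypothesis Q_spoiler : forall k c' c d', Q k c' c -> owner c = Spoiler -> move L E c' d' ->
  exists k' d, move L E c d /\ Q k' d' d /\ progress k k' d d'.
Hypothesis Q_duplicator : forall k c' c d, Q k c' c -> owner c = Duplicator -> move L E c d ->
  exists k' d', move L E c' d' /\ Q k' d' d /\ progress k k' d d'.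

Section Shadow.
Variables (sigma : strategy L) (k0 : nat) (c0' c0 : conf L).
Hypothesis Q0 : Q k0 c0' c0.
Hypothesis sigma_wins : dup_wins L E sigma c0.

(* Alongside the actual play p' from c0', the strategy keeps a shadow play from c0 that follows
   sigma and stays Q-related to p'; both the shadow and the answers are picked by epsilon. *)
Definition shadow_ok (k : nat) (c : conf L) (l : list (conf L)) (d' : conf L)
  (kd : nat * conf L) : Prop :=
  move L E c (snd kd) /\ Q (fst kd) d' (snd kd) /\ progress k (fst kd) (snd kd) d' /\
  (owner c = Duplicator -> snd kd = sigma l).

Definition shadow_next (l : list (nat * conf L)) (d' : conf L) : nat * conf L :=
  let kc := last l (k0, c0) in
  epsilon (inhabits (k0, c0)) (shadow_ok (fst kc) (snd kc) (map snd l) d').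

Definition shadow (p' : nat -> conf L) : nat -> list (nat * conf L) :=
  unroll (k0, c0) (fun l m => shadow_next l (p' (S m))).

Definition shadow_rank p' i := fst (last (shadow p' i) (k0, c0)).
Definition shadow_pos p' i := snd (last (shadow p' i) (k0, c0)).

Lemma map_snd_shadow p' i : map snd (shadow p' i) = hist (shadow_pos p') i.
Proof. unfold shadow at 1. now rewrite unroll_eq_map, map_map. Qed.

Lemma shadow_ext p1 p2 n : (forall j, j <= n -> p1 j = p2 j) -> shadow p1 n = shadow p2 n.
Proof. intros H. apply unroll_ext. intros l m Hm. now rewrite H by lia. Qed.

Definition response (p' : nat -> conf L) (n : nat) : conf L :=
  let d := sigma (map snd (shadow p' n)) in
  epsilon (inhabits c0') (fun d' => move L E (p' n) d' /\
    exists k', Q k' d' d /\ progress (shadow_rank p' n) k' d d').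

Definition shadow_strategy : strategy L :=
  fun h => response (fun i => nth i h c0') (pred (length h)).

Lemma shadow_strategy_hist p' i : shadow_strategy (hist p' i) = response p' i.
Proof.
  unfold shadow_strategy, response, shadow_rank. rewrite length_hist; cbn [pred].
  rewrite (shadow_ext _ p' i) by (intros; now apply nth_hist).
  now rewrite nth_hist.
Qed.

Definition shadow_inv (p' : nat -> conf L) (i : nat) : Prop :=
  consistent_prefix L E sigma c0 (shadow_pos p') i /\
  Q (shadow_rank p' i) (p' i) (shadow_pos p' i).

Lemma response_spec p' i : shadow_inv p' i -> owner (p' i) = Duplicator ->
  let d := sigma (hist (shadow_pos p') i) in
  move L E (p' i) (response p' i) /\
  exists k', Q k' (response p' i) d /\ progress (shadow_rank p' i) k' d (response p' i).
Proof.
  intros [Hcons HQ] Hown d. unfold response. rewrite map_snd_shadow.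
  apply epsilon_spec.
  rewrite (Q_owner _ _ _ HQ) in Hown.
  destruct (Q_duplicator _ _ _ d HQ Hown) as (k' & d' & Hmv & HQ' & Hprog);
    [now apply sigma_wins|].
  exists d'. split; [exact Hmv|]. now exists k'.
Qed.

Lemma shadow_step p' n i :
  consistent_prefix L E shadow_strategy c0' p' n -> i < n -> shadow_inv p' i ->
  shadow_ok (shadow_rank p' i) (shadow_pos p' i) (hist (shadow_pos p') i) (p' (S i))
    (last (shadow p' (S i)) (k0, c0)).
Proof.
  intros [_ Hp'] Hi Hinv.
  unfold shadow at 1. rewrite last_unroll_S. fold (shadow p' i).
  unfold shadow_next. rewrite map_snd_shadow. apply epsilon_spec.
  destruct (Hp' i Hi) as [Hmv Hfollow].
  pose proof (proj2 Hinv) as HQ.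
  destruct (owner (shadow_pos p' i)) eqn:Hown.
  - destruct (Q_spoiler _ _ _ _ HQ Hown Hmv) as (k' & d & Hmd & HQ' & Hprog).
    exists (k', d); cbn. split; [exact Hmd|split; [exact HQ'|split; [exact Hprog|congruence]]].
  - pose proof Hown as Hown'. rewrite <- (Q_owner _ _ _ HQ) in Hown'.
    pose proof (Hfollow Hown') as Hnext. rewrite shadow_strategy_hist in Hnext.
    destruct (response_spec p' i Hinv Hown') as [_ (k' & HQ' & Hprog)].
    rewrite <- Hnext in HQ', Hprog.
    exists (k', sigma (hist (shadow_pos p') i)); cbn.
    split; [now apply sigma_wins; [apply Hinv|]|].
    split; [exact HQ'|]. split; [exact Hprog|reflexivity].
Qed.

Lemma shadow_invariant p' n :
  consistent_prefix L E shadow_strategy c0' p' n -> forall i, i <= n -> shadow_inv p' i.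
Proof.
  intros Hp' i. induction i as [|i IHi]; intros Hi.
  - split; [now apply consistent_prefix_0|]. now rewrite (proj1 Hp').
  - specialize (IHi ltac:(lia)).
    destruct (shadow_step p' n i Hp' ltac:(lia) IHi) as (Hmv & HQ & _ & Hfollow).
    split; [now apply consistent_prefix_S; [apply IHi| |]|exact HQ].
Qed.

Lemma shadow_strategy_wins : dup_wins L E shadow_strategy c0'.
Proof.
  split.
  - intros p' n Hp' Hown. rewrite shadow_strategy_hist.
    now apply response_spec; [apply (shadow_invariant p' n)|].
  - intros p' Hp'.
    assert (Hinv : forall i, shadow_inv p' i) by (intros i; now apply (shadow_invariant p' i)).
    assert (Hstep : forall i, shadow_ok (shadow_rank p' i) (shadow_pos p' i)
                      (hist (shadow_pos p') i) (p' (S i)) (last (shadow p' (S i)) (k0, c0)))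
      by (intros i; apply (shadow_step p' (S i)); auto).
    destruct (nondecreasing_bounded_stable (shadow_rank p') B) as [M HM].
    { intros i. apply (Hstep i). }
    { intros i. apply (Q_bounded _ _ _ (proj2 (Hinv i))). }
    intros N. destruct (proj2 sigma_wins (shadow_pos p') (fun i => proj1 (Hinv i)) (S (N + M)))
      as [[|i] [Hi Hrew]]; [lia|].
    exists (S i). split; [lia|].
    apply (Hstep i); [|exact Hrew].
    fold (shadow_rank p' (S i)). rewrite (HM (S i)), (HM i) by lia. reflexivity.
Qed.

End Shadow.

Lemma winning_simulation k c' c : Q k c' c -> winning c -> winning c'.
Proof.
  intros HQ [sigma Hwin]. exists (shadow_strategy sigma k c' c).
  now apply shadow_strategy_wins.
Qed.

End RankedSimulation.

Definition repeat_challenge (c : conf L) : conf L :=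
  Conf Duplicator (pos c) (chal c) (mem c) false.

(* Duplicator reaches a position without pending challenge through winning positions, against
   a Spoiler who always repeats the pending challenge (move S1). *)
Inductive reaches_reset : conf L -> Prop :=
| reset_now c d : move L E c d -> winning d -> chal d = None -> reaches_reset c
| reset_later c d : move L E c d -> winning d -> chal d <> None ->
    reaches_reset (repeat_challenge d) -> reaches_reset c.

Lemma repeat_challenge_move c :
  owner c = Spoiler -> chal c <> None -> move L E c (repeat_challenge c).
Proof. destruct c as [? [? ?] ? ? ?]; cbn; intros ->. now constructor. Qed.

Lemma duplicator_move_rew c d :
  move L E c d -> owner c = Duplicator -> chal d <> None -> rew d = false.
Proof. destruct 1; cbn; congruence. Qed.

Section Stalling.
Variables (sigma : strategy L) (c0 : conf L).
Hypothesis sigma_wins : dup_wins L E sigma c0.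

Definition stalling_play (i : nat) : conf L :=
  last (unroll c0 (fun l _ => let e := last l c0 in
    match owner e with Duplicator => sigma l | Spoiler => repeat_challenge e end) i) c0.

Lemma stalling_play_S i : stalling_play (S i) =
  match owner (stalling_play i) with
  | Duplicator => sigma (hist stalling_play i)
  | Spoiler => repeat_challenge (stalling_play i)
  end.
Proof. unfold stalling_play. now rewrite last_unroll_S, hist_unroll. Qed.

Definition cannot_reset (e : conf L) : Prop :=
  (owner e = Duplicator /\ ~ reaches_reset e) \/
  (owner e = Spoiler /\ chal e <> None /\ ~ reaches_reset (repeat_challenge e)).

Lemma stalling_play_invariant : cannot_reset c0 -> forall n,
  consistent_prefix L E sigma c0 stalling_play n /\ cannot_reset (stalling_play n) /\
  (1 <= n -> rew (stalling_play n) = false).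
Proof.
  intros Hcannot n. induction n as [|n (Hcons & Hn & _)].
  - split; [now apply consistent_prefix_0|]. split; [exact Hcannot|lia].
  - assert (Hmv : move L E (stalling_play n) (stalling_play (S n)) /\
      (owner (stalling_play n) = Duplicator -> stalling_play (S n) = sigma (hist stalling_play n))).
    { rewrite stalling_play_S.
      destruct Hn as [[Hown _]|(Hown & Hchal & _)]; rewrite Hown;
        [split; [now apply sigma_wins|reflexivity]|split; [now apply repeat_challenge_move|easy]]. }
    assert (Hcons' : consistent_prefix L E sigma c0 stalling_play (S n))
      by now apply consistent_prefix_S; [|apply Hmv|apply Hmv].
    split; [exact Hcons'|].
    destruct Hn as [[Hown Hno]|(Hown & Hchal & Hno)].
    + assert (Hwin : winning (stalling_play (S n)))
        by now apply (winning_after_prefix sigma c0).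
      destruct (classic (chal (stalling_play (S n)) = None)) as [Hnone|Hsome].
      { exfalso. apply Hno. now apply (reset_now _ _ (proj1 Hmv)). }
      split; [right|intros _; now apply (duplicator_move_rew (stalling_play n))].
      split; [destruct (proj1 Hmv); cbn in *; congruence|].
      split; [exact Hsome|]. intros Hr. apply Hno.
      now apply (reset_later _ _ (proj1 Hmv)).
    + rewrite stalling_play_S, Hown. split; [left; now split|reflexivity].
Qed.

End Stalling.

Lemma winning_reaches_reset c : winning c -> owner c = Duplicator -> reaches_reset c.
Proof.
  intros [sigma Hwin] Hown. apply NNPP. intros Hno.
  (* otherwise the stalling play is consistent with sigma but has no checkmark after round 0 *)
  pose proof (stalling_play_invariant sigma c Hwin (or_introl (conj Hown Hno))) as Hinv.
  destruct (proj2 Hwin (stalling_play sigma c) (fun n => proj1 (Hinv n)) 1) as [i [Hi Hr]].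
  destruct (Hinv i) as (_ & _ & Hfalse). rewrite Hfalse in Hr by lia. discriminate.
Qed.

(* The rank-0 pairs give the four lemmas below; the others are what matched plays reach from
   them. The [sim_loop_*] pairs arise when Spoiler, in the reset position, re-issues the
   pending challenge (a,u), which forces u --a--> u. *)
Inductive sim : nat -> conf L -> conf L -> Prop :=
| sim_refl c : sim 4 c c
| sim_rew o p ch m r r' : sim 3 (Conf o p ch m r') (Conf o p ch m r)
| sim_loop_reset u v a r r' : step u a u ->
    sim 2 (Conf Spoiler (u,v) (Some (a,u)) (Some (v,Frown)) r')
          (Conf Spoiler (u,v) None None r)
| sim_loop_smile_dup u v a r r' : ~ E Smile -> step u a u ->
    sim 1 (Conf Duplicator (u,v) (Some (a,u)) (Some (v,Frown)) r')
          (Conf Duplicator (u,v) (Some (a,u)) (Some (v,Smile)) r)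
| sim_loop_smile_spo u v a r r' : ~ E Smile -> step u a u ->
    sim 1 (Conf Spoiler (u,v) (Some (a,u)) (Some (v,Frown)) r')
          (Conf Spoiler (u,v) (Some (a,u)) (Some (v,Smile)) r)
| sim_swap u v r r' :
    sim 0 (Conf Spoiler (u,v) None None r') (Conf Spoiler (v,u) None None r)
| sim_reset_frown u v a w r r' :
    sim 0 (Conf Spoiler (u,v) None None r') (Conf Spoiler (u,v) (Some (a,w)) (Some (v,Frown)) r)
| sim_reset_smile u v a r r' : ~ E Smile ->
    sim 0 (Conf Spoiler (u,v) None None r') (Conf Spoiler (u,v) (Some (a,u)) (Some (v,Smile)) r).

Lemma move_rew_irrelevant o p ch m r1 r2 d :
  move L E (Conf o p ch m r1) d -> move L E (Conf o p ch m r2) d.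
Proof. inversion 1; subst; econstructor; eauto. Qed.

Local Tactic Notation "answer" constr(k) open_constr(d) tactic3(mv) :=
  exists k, d; split; [mv|split; [constructor; eauto|split; [lia|intros; try lia; auto]]].

Lemma sim_spoiler k c' c d' : sim k c' c -> owner c = Spoiler -> move L E c' d' ->
  exists k' d, move L E c d /\ sim k' d' d /\ progress k k' d d'.
Proof.
  intros Hsim Hown Hmv. destruct Hsim; try discriminate.
  - answer 4 _ (exact Hmv).
  - answer 4 _ (eapply move_rew_irrelevant; exact Hmv).
  - inversion Hmv; subst.
    + answer 4 (Conf Duplicator (u,v) (Some (a,u)) (Some (v,Frown)) false) (apply S2a; eauto).
    + answer 3 (Conf Duplicator (u,v) (Some (a0,s')) (Some (v,Frown)) false) (apply S2a; eauto).
    + answer 4 _ (apply S3; eauto).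
  - inversion Hmv; subst.
    + answer 1 (Conf Duplicator (u,v) (Some (a,u)) (Some (v,Smile)) false)
        (apply S1; congruence).
    + answer 4 _ (apply S2b; eauto).
    + answer 4 _ (apply S3; eauto).
  - inversion Hmv; subst; [congruence| | |].
    + answer 3 (Conf Duplicator (u,v) (Some (a,s')) (Some (v,Frown)) true) (apply S3; eauto).
    + answer 4 _ (apply S3; eauto).
    + answer 4 _ (apply S2b; eauto; congruence).
  - inversion Hmv; subst; [congruence| | |].
    + destruct (classic (Some (a,w) = Some (a0,s'))) as [He|He].
      * injection He as -> ->. answer 4 _ (apply S1; congruence).
      * answer 3 (Conf Duplicator (u,v) (Some (a0,s')) (Some (v,Frown)) true) (apply S2b; eauto).
    + destruct (classic (Some (a,w) = Some (a0,s'))) as [He|He].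
      * injection He as -> ->.
        answer 3 (Conf Duplicator (u,v) (Some (a0,s')) (Some (v,Frown)) false)
          (apply S1; congruence).
      * answer 4 _ (apply S2b; eauto).
    + answer 4 _ (apply S3; eauto).
  - inversion Hmv; subst; [congruence| | |].
    + destruct (classic (Some (a,u) = Some (a0,s'))) as [He|He].
      * injection He as -> ->.
        answer 1 (Conf Duplicator (s',v) (Some (a0,s')) (Some (v,Smile)) false)
          (apply S1; congruence).
      * answer 3 (Conf Duplicator (u,v) (Some (a0,s')) (Some (v,Frown)) true) (apply S2b; eauto).
    + destruct (classic (Some (a,u) = Some (a0,s'))) as [He|He].
      * injection He as -> ->.
        answer 1 (Conf Duplicator (s',v) (Some (a0,s')) (Some (v,Smile)) false)
          (apply S1; congruence).
      * answer 4 _ (apply S2b; eauto).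
    + answer 4 _ (apply S3; eauto).
Qed.

Lemma sim_duplicator k c' c d : sim k c' c -> owner c = Duplicator -> move L E c d ->
  exists k' d', move L E c' d' /\ sim k' d' d /\ progress k k' d d'.
Proof.
  intros Hsim Hown Hmv. destruct Hsim; try discriminate.
  - answer 4 _ (exact Hmv).
  - answer 4 _ (eapply move_rew_irrelevant; exact Hmv).
  - inversion Hmv; subst; try contradiction.
    + answer 4 _ (apply D1; eauto).
    + answer 1 (Conf Spoiler (u,v') (Some (a,u)) (Some (v',Frown)) false) (apply D3a; eauto).
    + answer 2 (Conf Spoiler (u,v') (Some (a,u)) (Some (v',Frown)) false) (apply D3a; eauto).
Qed.

Lemma winning_sim k c' c : sim k c' c -> winning c -> winning c'.
Proof.
  apply (winning_simulation sim 4).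
  - destruct 1; lia.
  - now destruct 1.
  - apply sim_spoiler.
  - apply sim_duplicator.
Qed.

Lemma game_equiv_of_winning u v r :
  winning (Conf Spoiler (u,v) None None r) -> game_equiv L E u v.
Proof. exact (winning_sim _ _ _ (sim_rew _ _ _ _ _ _)). Qed.

Lemma game_equiv_sym u v : game_equiv L E v u -> game_equiv L E u v.
Proof. exact (winning_sim _ _ _ (sim_swap _ _ _ _)). Qed.

Lemma game_equiv_of_frown u v a w r :
  winning (Conf Spoiler (u,v) (Some (a,w)) (Some (v,Frown)) r) -> game_equiv L E u v.
Proof. exact (winning_sim _ _ _ (sim_reset_frown _ _ _ _ _ _)). Qed.

Lemma game_equiv_of_smile u v a r : ~ E Smile ->
  winning (Conf Spoiler (u,v) (Some (a,u)) (Some (v,Smile)) r) -> game_equiv L E u v.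
Proof. intros HE. exact (winning_sim _ _ _ (sim_reset_smile _ _ _ _ _ HE)). Qed.

End Game.

Lemma Exy_Smile x y : Exy x y Smile -> y = o.
Proof. now intros [[? _]|[_ ?]]. Qed.

Lemma Exy_Frown x y : Exy x y Frown -> x = o.
Proof. now intros [[_ ?]|[? _]]. Qed.

Section Phases.
Context (L : LTS) (x y : ob).
Local Notation R := (game_equiv L (Exy x y)).

Lemma tstep_refl z s v : (z = b -> R s v) -> tstep L z R s v v.
Proof. destruct z; cbn; intros; repeat split; try apply rt_refl; auto. Qed.

Lemma tstep_snoc z s t v v' :
  tstep L z R s t v -> step v tau v' -> (z = b -> R s v') -> tstep L z R s t v'.
Proof.
  intros Hv Hstep HR. destruct z; cbn in *.
  - eapply rt_trans; [exact Hv|now apply rt_step].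
  - destruct Hv as (Hv & Ht & _). repeat split; auto.
    eapply rt_trans; [exact Hv|now apply rt_step].
Qed.

Definition weak_answer (s t s' : St L) (a : Act L) : Prop :=
  exists t' t1 t2, tstep L x R s t t1 /\ step t1 a t2 /\ tstep L y R s' t2 t' /\ R s' t'.

Lemma smile_phase s t s' t1 t2 a : tstep L x R s t t1 -> step t1 a t2 ->
  forall c, reaches_reset L (Exy x y) c -> forall u v vb r,
  c = Conf Duplicator (u,v) (Some (a,s')) (Some (vb,Smile)) r ->
  tstep L y R s' t2 vb -> (y = b -> u = s' /\ v = vb) ->
  weak_answer s t s' a.
Proof.
  intros Ht1 Hstep c Hreach.
  induction Hreach as [c d Hmv Hwin Hnone|c d Hmv Hwin Hsome _ IH];
    intros u v vb r -> Hvb Hinv; inversion Hmv; subst; cbn in *; try congruence.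
  - exists vb, t1, t2. repeat split; auto. eapply game_equiv_of_winning; eauto.
  - assert (HR : R s' v') by (eapply game_equiv_of_winning; eauto).
    exists v', t1, t2. repeat split; auto. now apply (tstep_snoc _ _ _ vb).
  - apply (IH u v' v' false); [reflexivity| |].
    + apply (tstep_snoc _ _ _ vb); auto. intros ->.
      destruct (Hinv eq_refl) as [-> ->].
      apply (game_equiv_of_smile _ _ _ _ a false); [intros ?%Exy_Smile; discriminate|exact Hwin].
    + intros Hy. destruct (Hinv Hy) as [-> ->]. now split.
  - match goal with H : Exy _ _ Smile |- _ => apply Exy_Smile in H as Hy end.
    apply (IH u v v' false); [reflexivity| |congruence].
    apply (tstep_snoc _ _ _ vb); auto. congruence.
Qed.

(* The disjunction on vb records whether Duplicator already made a tau-move; if not, a D1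
   answer to a tau-challenge is the first alternative of the bisimulation clause. *)
Lemma frown_phase s t s' a :
  forall c, reaches_reset L (Exy x y) c -> forall v vb r,
  c = Conf Duplicator (s,v) (Some (a,s')) (Some (vb,Frown)) r ->
  tstep L x R s t vb -> (vb = t \/ exists t1, tstep L x R s t t1 /\ step t1 tau vb) ->
  (x = b -> v = vb) ->
  (a = tau /\ R s' t) \/ weak_answer s t s' a.
Proof.
  intros c Hreach.
  induction Hreach as [c d Hmv Hwin Hnone|c d Hmv Hwin Hsome Hreach IH];
    intros v vb r -> Hvb Hlast Hinv; inversion Hmv; subst; cbn in *; try congruence.
  - assert (HR : R s' vb) by (eapply game_equiv_of_winning; eauto).
    destruct Hlast as [->|(t1 & Ht1 & Htau)]; [now left|].
    right. exists vb, t1, vb. repeat split; auto using tstep_refl.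
  - assert (HR : R s' v') by (eapply game_equiv_of_winning; eauto).
    right. exists v', vb, v'. repeat split; auto using tstep_refl.
  - right. eapply (smile_phase s t s' vb v' a Hvb); [eassumption|exact Hreach|reflexivity| |easy].
    apply tstep_refl. intros ->.
    apply (game_equiv_of_smile _ _ _ _ a false); [intros ?%Exy_Smile; discriminate|exact Hwin].
  - right. match goal with H : Exy _ _ Smile |- _ => apply Exy_Smile in H as Hy end.
    eapply (smile_phase s t s' vb v' a Hvb); [eassumption|exact Hreach|reflexivity| |congruence].
    apply tstep_refl. congruence.
  - apply (IH v' v' false); [reflexivity| |eauto|easy].
    apply (tstep_snoc _ _ _ vb); auto. intros ->.
    apply (game_equiv_of_frown _ _ _ _ a s' false), Hwin.
  - match goal with H : Exy _ _ Frown |- _ => apply Exy_Frown in H as Hx end.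
    apply (IH v v' false); [reflexivity| |eauto|congruence].
    apply (tstep_snoc _ _ _ vb); auto. congruence.
Qed.

End Phases.

Theorem lemma5p10 (L : LTS) (x y : ob) :
  generic_bisim L x y (game_equiv L (Exy x y)).
Proof.
  split; [intros s t; apply game_equiv_sym|].
  intros s t s' a Hst Hstep.
  assert (Hreach : reaches_reset L (Exy x y)
                     (Conf Duplicator (s,t) (Some (a,s')) (Some (t,Frown)) false)).
  { apply winning_reaches_reset; [|reflexivity].
    apply (winning_after_spoiler_move _ _ _ _ Hst); [reflexivity|now apply S2a]. }
  apply (frown_phase L x y s t s' a _ Hreach t t false eq_refl); [|now left|easy].
  apply tstep_refl. intros _. exact Hst.
Qed.
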